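(* Let $p$ be a prime number and $\Gamma$ a group. If $\Gamma$ is Jordan (respectively, nilpotently Jordan of class at most $c$), then $\Gamma$ is $p$-Jordan (respectively, nilpotently $p$-Jordan of class at most $c$).
   Context: A group $\Gamma$ is Jordan if there is a constant $J(\Gamma)$ such that every finite subgroup of $\Gamma$ contains a normal abelian subgroup of index at most $J(\Gamma)$; it is nilpotently Jordan of class at most $c$ if there is $J(\Gamma)$ such that every finite subgroup contains a normal subgroup of index at most $J(\Gamma)$ that is nilpotent of class at most $c$. For a prime $p$, $\Gamma$ is $p$-Jordan (respectively, nilpotently $p$-Jordan of class at most $c$) if there exist constants $J(\Gamma)$, $e(\Gamma)$ such that every finite subgroup $G$ of $\Gamma$ contains a normal subgroup $N$ of order coprime to $p$ and index at most $J(\Gamma)\cdot|G_p|^{e(\Gamma)}$ with $N$ abelian (respectively, nilpotent of class at most $c$), where $G_p$ is a $p$-Sylow subgroup of $G$. *)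

From HB Require Import structures.
From mathcomp Require Import all_boot all_fingroup all_solvable.
Set Implicit Arguments. Unset Strict Implicit. Unset Printing Implicit Defensive.
Import GroupScope.

Definition is_group (T : Type) (mul : T -> T -> T) (one : T) (inv : T -> T) : Prop :=
  [/\ forall x y z, mul x (mul y z) = mul (mul x y) z,
      forall x, mul one x = x &
      forall x, mul (inv x) x = one].

(* A finite subgroup of T is represented as the injective homomorphic image
   of a finite group G : {group gT}; every finite subgroup arises this way. *)
Definition fin_embedding (T : Type) (mul : T -> T -> T)
    (gT : finGroupType) (G : {group gT}) (f : gT -> T) : Prop :=
  {in G &, injective f} /\ {in G &, forall x y, f (x * y) = mul (f x) (f y)}.

Definition Jordan (T : Type) (mul : T -> T -> T) : Prop :=
  exists J : nat, forall (gT : finGroupType) (G : {group gT}) (f : gT -> T),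
    fin_embedding mul G f ->
    exists N : {group gT}, [/\ N <| G, abelian N & #|G : N| <= J].

Definition nilJordan (T : Type) (mul : T -> T -> T) (c : nat) : Prop :=
  exists J : nat, forall (gT : finGroupType) (G : {group gT}) (f : gT -> T),
    fin_embedding mul G f ->
    exists N : {group gT},
      [/\ N <| G, nilpotent N, nil_class N <= c & #|G : N| <= J].

Definition pJordan (T : Type) (mul : T -> T -> T) (p : nat) : Prop :=
  exists J e : nat, forall (gT : finGroupType) (G : {group gT}) (f : gT -> T),
    fin_embedding mul G f ->
    exists N : {group gT},
      [/\ N <| G, coprime #|N| p, abelian N &
          forall P : {group gT}, P \in 'Syl_p(G) -> #|G : N| <= J * #|P| ^ e].

Definition nilpJordan (T : Type) (mul : T -> T -> T) (p c : nat) : Prop :=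
  exists J e : nat, forall (gT : finGroupType) (G : {group gT}) (f : gT -> T),
    fin_embedding mul G f ->
    exists N : {group gT},
      [/\ N <| G, coprime #|N| p, nilpotent N, nil_class N <= c &
          forall P : {group gT}, P \in 'Syl_p(G) -> #|G : N| <= J * #|P| ^ e].

From mathcomp Require Import all_boot all_fingroup all_solvable.

(* Abelian means nilpotent of class at most 1, so it suffices to treat the
   nilpotent case.  Given a normal nilpotent subgroup N of bounded index in a
   finite subgroup G, replace N by its p'-core 'O_p'(N).  It is characteristic
   in N, hence normal in G, of order prime to p, and inherits nilpotency and
   the class bound.  As N is nilpotent, 'O_p'(N) is a p'-Hall subgroup of N,
   so #|N : 'O_p'(N)| is the p-part of #|N|, which divides the order of a
   Sylow p-subgroup P of G; thus #|G : 'O_p'(N)| <= #|G : N| * #|P|.  Only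
   finite subgroups matter. *)

Set Implicit Arguments.
Unset Strict Implicit.
Unset Printing Implicit Defensive.
Import GroupScope.

Lemma nil_classS (gT : finGroupType) (H G : {group gT}) :
  H \subset G -> nilpotent G -> nil_class H <= nil_class G.
Proof.
move=> sHG nilG; apply/(lcn_nil_classP _ (nilpotentS sHG nilG)).
by apply/trivgP; rewrite -(lcn_nil_classP _ nilG (leqnn _)); apply: lcnS.
Qed.

Lemma index_pcore_nil (gT : finGroupType) (pi : nat_pred) (N : {group gT}) :
  nilpotent N -> #|N : 'O_pi(N)| = (#|N|`_pi^')%N.
Proof.
move=> nilN; have hallO := nilpotent_pcore_Hall pi nilN.
apply/eqP; rewrite -(eqn_pmul2l (part_gt0 pi #|N|)) -(card_Hall hallO).
by rewrite Lagrange ?pcore_sub // (card_Hall hallO) partnC.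
Qed.

Lemma index_p'core_normal_nil (gT : finGroupType) (p : nat)
    (G N P : {group gT}) :
  N <| G -> nilpotent N -> p.-Sylow(G) P ->
  #|G : 'O_p^'(N)| <= #|G : N| * #|P|.
Proof.
move=> /andP[sNG _] nilN sylP.
rewrite -(Lagrange_index sNG (pcore_sub _ _)) leq_mul2l.
rewrite index_pcore_nil // partnNK (card_Hall sylP).
by rewrite dvdn_leq ?orbT ?part_gt0 ?partn_dvd ?cardSg.
Qed.

Lemma pcore_normal_trans (gT : finGroupType) (pi : nat_pred)
    (G N : {group gT}) :
  N <| G -> 'O_pi(N) <| G.
Proof. exact: char_normal_trans (pcore_char _ _). Qed.

Lemma coprime_p'core (gT : finGroupType) (p : nat) (N : {group gT}) :
  prime p -> coprime #|'O_p^'(N)| p.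
Proof.
move=> p_pr; rewrite coprime_sym prime_coprime // -p'natE //.
exact: pcore_pgroup.
Qed.

Section FiniteSubgroups.

Variables (T : Type) (mul : T -> T -> T).

Lemma Jordan_nilJordan1 : Jordan mul -> nilJordan mul 1.
Proof.
case=> J JordanJ; exists J => gT G f embf.
have [N [nNG abN iN]] := JordanJ gT G f embf.
by exists N; rewrite nil_class1 abelian_nil.
Qed.

Lemma nilpJordan1_pJordan (p : nat) : nilpJordan mul p 1 -> pJordan mul p.
Proof.
case=> J [e nilpJordanJe]; exists J, e => gT G f embf.
have [N [nNG cNp _ cl1 iN]] := nilpJordanJe gT G f embf.
by exists N; rewrite -nil_class1.
Qed.

Lemma nilJordan_nilpJordan (p c : nat) :
  prime p -> nilJordan mul c -> nilpJordan mul p c.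
Proof.
move=> p_pr [J nilJordanJ]; exists J, 1%N => gT G f embf.
have [N [nNG nilN clN iN]] := nilJordanJ gT G f embf.
have sON : 'O_p^'(N) \subset N := pcore_sub _ _.
exists 'O_p^'(N)%G; split.
- exact: pcore_normal_trans.
- exact: coprime_p'core.
- exact: nilpotentS sON nilN.
- exact: leq_trans (nil_classS sON nilN) clN.
move=> P; rewrite inE expn1 => sylP.
apply: leq_trans (index_p'core_normal_nil nNG nilN sylP) _.
by rewrite leq_mul2r iN orbT.
Qed.

End FiniteSubgroups.

Theorem corollary2p6 (p : nat) (T : Type) (mul : T -> T -> T) (one : T)
    (inv : T -> T) :
  prime p -> is_group mul one inv ->
  (Jordan mul -> pJordan mul p) /\
  (forall c : nat, nilJordan mul c -> nilpJordan mul p c).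
Proof.
move=> p_pr _; split=> [JordanT | c]; last exact: nilJordan_nilpJordan.
exact/nilpJordan1_pJordan/nilJordan_nilpJordan/Jordan_nilJordan1.
Qed.
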